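(* Let $N\ge1$ and let $f_0,\alpha,f_2,\dots,f_N$ be differentiable functions of $z$ with $\alpha(z)\in(-1,1)$; set $f_1\equiv0$ and $\hat I(z,\mu)=\sum_{i=0}^N f_i(z)\Phi_i(\mu)$, where $\Phi_i$ is taken with parameter $\alpha(z)$. Then $$\partial_z\hat I-\tilde{\mathcal P}\,\partial_z\hat I=\big(\alpha\,\partial_zf_N-4f_N\,\partial_z\alpha\big)\tilde\Phi_{N+1},$$ and consequently, for $k=0,\dots,N$, $$\int_{-1}^1\mu^{k+1}\big(\partial_z\hat I-\tilde{\mathcal P}\partial_z\hat I\big)\,d\mu=\begin{cases}0,&k<N,\\ \tilde K_{N+1,N+1}\big(\alpha\,\partial_zf_N-4f_N\,\partial_z\alpha\big),&k=N.\end{cases}$$ In particular, for $N=1$ all these quantities vanish.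
   Context: For a parameter $\alpha\in(-1,1)$ define on $[-1,1]$ the weights $\omega(\mu)=(1+\alpha\mu)^{-4}$ and $\tilde\omega(\mu)=(1+\alpha\mu)^{-5}$. Let $\{\phi_k\}_{k\ge0}$ (resp. $\{\tilde\phi_k\}_{k\ge0}$) be the monic orthogonal polynomials on $[-1,1]$ with respect to $\omega$ (resp. $\tilde\omega$); their coefficients depend smoothly on $\alpha$. Set $\Phi_k=\omega\phi_k$, $\tilde\Phi_k=\tilde\omega\tilde\phi_k$, $\tilde K_{j,k}=\int_{-1}^1\mu^j\tilde\phi_k\,\tilde\omega\,d\mu$. The operator $\tilde{\mathcal P}$ (at parameter $\alpha$) is the orthogonal projection onto $\mathrm{span}\{\tilde\Phi_0,\dots,\tilde\Phi_N\}$ with respect to the inner product $\langle\Phi,\Psi\rangle=\int_{-1}^1\Phi\Psi/\tilde\omega\,d\mu$, i.e. $\tilde{\mathcal P}g=\sum_{i=0}^N\frac{\int_{-1}^1 g\,\tilde\phi_i\,d\mu}{\tilde K_{i,i}}\tilde\Phi_i$. *)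

From Stdlib Require Import Reals ClassicalEpsilon.
Open Scope R_scope.

(* Total Riemann integral on [a,b]: the value of RiemannInt when f is
   Riemann-integrable (unspecified otherwise; all integrands used below are
   continuous on [-1,1]). *)
Definition Rint (f : R -> R) (a b : R) : R :=
  epsilon (inhabits 0%R)
    (fun v => exists pr : Riemann_integrable f a b, RiemannInt pr = v).

Fixpoint sumR (n : nat) (g : nat -> R) : R :=
  match n with
  | O => 0
  | S m => sumR m g + g m
  end.

Definition omega  (a mu : R) : R := / (1 + a * mu) ^ 4.
Definition omegat (a mu : R) : R := / (1 + a * mu) ^ 5.

Definition mpoly (c : nat -> nat -> R -> R) (k : nat) (a mu : R) : R :=
  mu ^ k + sumR k (fun j => c k j a * mu ^ j).

Definition is_MOP (w : R -> R -> R) (c : nat -> nat -> R -> R) : Prop :=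
  forall a, -1 < a < 1 -> forall k j : nat, (j < k)%nat ->
    Rint (fun mu => mu ^ j * mpoly c k a mu * w a mu) (-1) 1 = 0.

Definition Phi  (c : nat -> nat -> R -> R) (a : R) (k : nat) (mu : R) : R :=
  omega a mu * mpoly c k a mu.
Definition Phit (ct : nat -> nat -> R -> R) (a : R) (k : nat) (mu : R) : R :=
  omegat a mu * mpoly ct k a mu.

Definition Kt (ct : nat -> nat -> R -> R) (a : R) (j k : nat) : R :=
  Rint (fun mu => mu ^ j * mpoly ct k a mu * omegat a mu) (-1) 1.

Definition Ptilde (ct : nat -> nat -> R -> R) (N : nat) (a : R)
    (g : R -> R) (mu : R) : R :=
  sumR (S N) (fun i =>
    Rint (fun nu => g nu * mpoly ct i a nu) (-1) 1 / Kt ct a i i * Phit ct a i mu).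

Definition Ihat (c : nat -> nat -> R -> R) (N : nat) (f : nat -> R -> R)
    (alpha : R -> R) (z mu : R) : R :=
  sumR (S N) (fun i => f i z * Phi c (alpha z) i mu).

Definition is_dz_Ihat (c : nat -> nat -> R -> R) (N : nat) (f : nat -> R -> R)
    (alpha : R -> R) (dI : R -> R -> R) : Prop :=
  forall z mu, -1 <= mu <= 1 ->
    derivable_pt_lim (fun z' => Ihat c N f alpha z' mu) z (dI z mu).

From Stdlib Require Import Reals Lra Lia ClassicalEpsilon Classical.
From Coquelicot Require Import Coquelicot.
Open Scope R_scope.

(* Since omega = (1 + alpha mu) omegat and the z-derivative of a monic phi_k only
   involves its lower coefficients, d_z Ihat = omegat B with B a polynomial in mu of
   degree <= N + 1 whose mu^(N+1) coefficient is coef = alpha f_N' - 4 f_N alpha'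
   (from (1 + alpha mu) phi_N and d_z omega = -4 mu alpha' omegat).  Write
   B = s + coef phit_(N+1) with deg s <= N.  Since the norms Kt_(i,i) are positive,
   the projection reproduces omegat s (its expansion in the orthogonal basis
   phit_0, ..., phit_N) and annihilates omegat phit_(N+1), which is orthogonal to all
   polynomials of degree <= N; so the residual is coef Phit_(N+1), and its moments are
   coef Kt_(k+1,N+1).  For N = 1, f_1 = 0 forces coef = 0. *)

Lemma sumR_ext n g h :
  (forall j, (j < n)%nat -> g j = h j) -> sumR n g = sumR n h.
Proof.
induction n as [|n IH]; intros E; cbn [sumR]; [reflexivity|].
rewrite IH, E by (intros; try apply E; lia); reflexivity.
Qed.

Lemma sumR_plus n g h : sumR n (fun j => g j + h j) = sumR n g + sumR n h.
Proof. induction n as [|n IH]; cbn [sumR]; [ring|rewrite IH; ring]. Qed.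

Lemma sumR_scal n c g : sumR n (fun j => c * g j) = c * sumR n g.
Proof. induction n as [|n IH]; cbn [sumR]; [ring|rewrite IH; ring]. Qed.

Lemma sumR_shift n g : sumR (S n) g = g O + sumR n (fun j => g (S j)).
Proof. induction n as [|n IH]; cbn [sumR] in *; [ring|rewrite IH; ring]. Qed.

Definition deg_lt (n : nat) (p : R -> R) : Prop :=
  exists b : nat -> R, forall x, p x = sumR n (fun j => b j * x ^ j).

Lemma deg_lt_coefs n b : deg_lt n (fun x => sumR n (fun j => b j * x ^ j)).
Proof. exists b; reflexivity. Qed.

Lemma deg_lt_ext n p q : (forall x, p x = q x) -> deg_lt n p -> deg_lt n q.
Proof. intros E [b Hb]; exists b; intros x; rewrite <- E; apply Hb. Qed.

Lemma deg_lt_plus n p q :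
  deg_lt n p -> deg_lt n q -> deg_lt n (fun x => p x + q x).
Proof.
intros [b Hb] [d Hd]; exists (fun j => b j + d j); intros x.
rewrite Hb, Hd, <- sumR_plus; apply sumR_ext; intros; ring.
Qed.

Lemma deg_lt_scal n c p : deg_lt n p -> deg_lt n (fun x => c * p x).
Proof.
intros [b Hb]; exists (fun j => c * b j); intros x.
rewrite Hb, <- sumR_scal; apply sumR_ext; intros; ring.
Qed.

Lemma deg_lt_minus n p q :
  deg_lt n p -> deg_lt n q -> deg_lt n (fun x => p x - q x).
Proof.
intros Hp Hq; apply (deg_lt_ext n (fun x => p x + (-1) * q x)); [intros; ring|].
apply deg_lt_plus; [exact Hp|apply deg_lt_scal, Hq].
Qed.

Lemma deg_lt_S n p : deg_lt n p -> deg_lt (S n) p.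
Proof.
intros [b Hb]; exists (fun j => if Nat.ltb j n then b j else 0); intros x.
cbn [sumR]; rewrite Nat.ltb_irrefl, Hb, Rmult_0_l, Rplus_0_r.
apply sumR_ext; intros j Hj; apply Nat.ltb_lt in Hj; rewrite Hj; reflexivity.
Qed.

Lemma deg_lt_le n m p : (n <= m)%nat -> deg_lt n p -> deg_lt m p.
Proof. induction 1; auto using deg_lt_S. Qed.

Lemma deg_lt_pow j : deg_lt (S j) (fun x => x ^ j).
Proof.
exists (fun i => if Nat.eqb i j then 1 else 0); intros x; cbn [sumR].
rewrite Nat.eqb_refl, (sumR_ext j _ (fun _ => 0 * 0)), sumR_scal; [ring|].
intros i Hi; replace (Nat.eqb i j) with false by (symmetry; apply Nat.eqb_neq; lia); ring.
Qed.

Lemma deg_lt_mulx n p : deg_lt n p -> deg_lt (S n) (fun x => x * p x).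
Proof.
intros [b Hb]; exists (fun j => match j with O => 0 | S j' => b j' end); intros x.
rewrite sumR_shift, Hb, <- sumR_scal; cbn [pow]; rewrite Rmult_0_l, Rplus_0_l.
apply sumR_ext; intros; cbn [pow]; ring.
Qed.

Lemma deg_lt_affine_mul n a p :
  deg_lt n p -> deg_lt (S n) (fun x => (1 + a * x) * p x).
Proof.
intros H; apply (deg_lt_ext _ (fun x => p x + a * (x * p x))); [intros; ring|].
apply deg_lt_plus; [apply deg_lt_S, H|apply deg_lt_scal, deg_lt_mulx, H].
Qed.

Lemma deg_lt_sum n m (g : nat -> R -> R) :
  (forall i, (i < m)%nat -> deg_lt n (g i)) ->
  deg_lt n (fun x => sumR m (fun i => g i x)).
Proof.
induction m as [|m IH]; intros H; cbn [sumR].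
- apply (deg_lt_ext n (fun x => 0 * 0)); [intros; ring|].
  apply deg_lt_scal; exists (fun _ => 0); intros x.
  rewrite (sumR_ext n _ (fun _ => 0 * 0)), sumR_scal by (intros; ring); ring.
- apply deg_lt_plus; [apply IH; intros; apply H; lia|apply H; lia].
Qed.

Lemma deg_lt_mpoly_sub_pow c k a : deg_lt k (fun x => mpoly c k a x - x ^ k).
Proof.
apply (deg_lt_ext k (fun x => sumR k (fun j => c k j a * x ^ j))).
- intros x; unfold mpoly; ring.
- apply deg_lt_coefs.
Qed.

Lemma deg_lt_mpoly c k a : deg_lt (S k) (mpoly c k a).
Proof.
apply (deg_lt_ext _ (fun x => x ^ k + (mpoly c k a x - x ^ k))); [intros; ring|].
apply deg_lt_plus; [apply deg_lt_pow|apply deg_lt_S, deg_lt_mpoly_sub_pow].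
Qed.

Lemma deg_lt_continuity n p : deg_lt n p -> continuity p.
Proof.
intros [b Hb] x.
apply (continuity_pt_ext (fun x => sumR n (fun j => b j * x ^ j))); [intros; symmetry; apply Hb|].
clear Hb; induction n as [|n IH]; cbn [sumR].
- apply continuity_pt_const; intros ??; reflexivity.
- apply (continuity_pt_plus _ (fun x => b n * x ^ n)); [exact IH|].
  apply (continuity_pt_mult (fun _ => b n) (fun x => x ^ n)).
  + apply continuity_pt_const; intros ??; reflexivity.
  + apply derivable_continuous_pt; exists (INR n * x ^ Init.Nat.pred n).
    apply derivable_pt_lim_pow.
Qed.

Lemma continuity_pow j : continuity (fun x => x ^ j).
Proof. exact (deg_lt_continuity _ _ (deg_lt_pow j)). Qed.

Lemma continuity_mpoly c k a : continuity (mpoly c k a).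
Proof. exact (deg_lt_continuity _ _ (deg_lt_mpoly c k a)). Qed.

Lemma continuity_pt_zero_from_right q :
  continuity_pt q 0 -> (forall x, 0 < x < 1 -> q x = 0) -> q 0 = 0.
Proof.
intros Hq Hzero; apply NNPP; intros Hne.
destruct (Hq (Rabs (q 0)) (Rabs_pos_lt _ Hne)) as [d [Hd Hball]].
set (x := Rmin (d / 2) (1 / 2)).
assert (Hx : 0 < x <= d / 2) by (split; [apply Rmin_pos|apply Rmin_l]; lra).
assert (Hx1 : x <= 1 / 2) by apply Rmin_r.
assert (Hdist : R_dist x 0 < d) by (unfold R_dist; rewrite Rminus_0_r, Rabs_right; lra).
assert (Hx0 : D_x no_cond 0 x) by (split; [exact I|apply Rlt_not_eq; lra]).
specialize (Hball x (conj Hx0 Hdist)).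
simpl in Hball; unfold R_dist in Hball.
rewrite Hzero, Rminus_0_l, Rabs_Ropp in Hball by lra; lra.
Qed.

Lemma coefs_zero_of_vanishing n b :
  (forall x, 0 < x < 1 -> sumR n (fun j => b j * x ^ j) = 0) ->
  forall j, (j < n)%nat -> b j = 0.
Proof.
revert b; induction n as [|n IH]; intros b H j Hj; [lia|].
assert (Hsplit : forall x,
  sumR (S n) (fun j => b j * x ^ j) = b O + x * sumR n (fun j => b (S j) * x ^ j)).
{ intros x; rewrite sumR_shift, <- sumR_scal; cbn [pow]; f_equal; [ring|].
  apply sumR_ext; intros; ring. }
assert (Hb0 : b O = 0).
{ set (q := fun x => sumR (S n) (fun j => b j * x ^ j)).
  replace (b O) with (q 0) by (unfold q; rewrite Hsplit; ring).
  apply continuity_pt_zero_from_right; [|exact H].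
  exact (deg_lt_continuity _ _ (deg_lt_coefs (S n) b) 0). }
destruct j as [|j]; [exact Hb0|].
apply (IH (fun j => b (S j))); [|lia].
intros x Hx; apply (Rmult_eq_reg_l x); [|lra].
rewrite Rmult_0_r, <- (H x Hx), Hsplit, Hb0; ring.
Qed.

Lemma mpoly_nonvanishing c k a : exists x, 0 < x < 1 /\ mpoly c k a x <> 0.
Proof.
apply not_all_not_ex; intros H.
set (b := fun j => if Nat.eqb j k then 1 else c k j a).
assert (Hb : forall x, 0 < x < 1 -> sumR (S k) (fun j => b j * x ^ j) = 0).
{ intros x Hx.
  destruct (Req_dec (mpoly c k a x) 0) as [E|E]; [|exfalso; apply (H x); tauto].
  rewrite <- E; unfold b, mpoly; cbn [sumR]; rewrite Nat.eqb_refl.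
  rewrite (sumR_ext k _ (fun j => c k j a * x ^ j)); [ring|].
  intros j Hj; replace (Nat.eqb j k) with false by (symmetry; apply Nat.eqb_neq; lia).
  reflexivity. }
assert (Hbk := coefs_zero_of_vanishing (S k) b Hb k (Nat.lt_succ_diag_r k)).
unfold b in Hbk; rewrite Nat.eqb_refl in Hbk; lra.
Qed.

Lemma Rint_eq_RInt f g a b :
  ex_RInt g a b -> (forall x, Rmin a b < x < Rmax a b -> f x = g x) ->
  Rint f a b = RInt g a b.
Proof.
intros Hg E.
assert (Hf : ex_RInt f a b)
  by (apply (ex_RInt_ext g); [intros; symmetry; apply E; assumption|exact Hg]).
rewrite <- (RInt_ext f g a b E); unfold Rint.
assert (Hex : exists v, exists pr : Riemann_integrable f a b, RiemannInt pr = v)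
  by (exists (RInt f a b), (ex_RInt_Reals_0 _ _ _ Hf); symmetry; apply RInt_Reals).
destruct (epsilon_spec (inhabits 0) _ Hex) as [pr <-]; symmetry; apply RInt_Reals.
Qed.

Lemma RInt_gt_0_of_pos_at (g : R -> R) a b x0 :
  a < x0 < b ->
  (forall x, a <= x <= b -> continuous g x) ->
  (forall x, a <= x <= b -> 0 <= g x) ->
  0 < g x0 -> 0 < RInt g a b.
Proof.
intros Hx0 Hcont Hnonneg Hpos.
assert (Hnear : locally x0 (fun x => 0 < g x)).
{ apply (Hcont x0 ltac:(lra)); apply (open_gt 0); exact Hpos. }
destruct Hnear as [e He].
set (d := Rmin (e / 2) (Rmin ((x0 - a) / 2) ((b - x0) / 2))).
assert (Hd : 0 < d <= e / 2 /\ d <= (x0 - a) / 2 /\ d <= (b - x0) / 2).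
{ pose proof (cond_pos e). unfold d; repeat split.
  - repeat apply Rmin_pos; lra.
  - apply Rmin_l.
  - eapply Rle_trans; [apply Rmin_r|apply Rmin_l].
  - eapply Rle_trans; [apply Rmin_r|apply Rmin_r]. }
assert (Hint : forall u v, a <= u <= v -> v <= b -> ex_RInt g u v).
{ intros u v Hu Hv; apply (@ex_RInt_continuous R_CompleteNormedModule); intros x Hx.
  rewrite Rmin_left, Rmax_right in Hx by lra; apply Hcont; lra. }
rewrite <- (RInt_Chasles g a (x0 - d) b), <- (RInt_Chasles g (x0 - d) (x0 + d) b)
  by (apply Hint; lra).
assert (0 <= RInt g a (x0 - d))
  by (apply RInt_ge_0; [lra|apply Hint; lra|intros; apply Hnonneg; lra]).
assert (0 <= RInt g (x0 + d) b)
  by (apply RInt_ge_0; [lra|apply Hint; lra|intros; apply Hnonneg; lra]).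
assert (0 < RInt g (x0 - d) (x0 + d)).
{ apply RInt_gt_0; [lra| |intros; apply Hcont; lra].
  intros x Hx; apply He; change (Rabs (x - x0) < e); apply Rabs_def1; lra. }
unfold plus; simpl; lra.
Qed.

Section WeightedInnerProduct.

Variables (w : R -> R -> R) (c : nat -> nat -> R -> R) (a : R).
Hypothesis a_range : -1 < a < 1.
Hypothesis w_continuous : forall x, -1 <= x <= 1 -> continuous (w a) x.
Hypothesis w_pos : forall x, -1 <= x <= 1 -> 0 < w a x.
Hypothesis c_MOP : is_MOP w c.

Definition ip (p q : R -> R) : R := RInt (fun x => p x * q x * w a x) (-1) 1.

Lemma ex_RInt_ip p q :
  continuity p -> continuity q -> ex_RInt (fun x => p x * q x * w a x) (-1) 1.
Proof.
intros Hp Hq; apply (@ex_RInt_continuous R_CompleteNormedModule); intros x Hx.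
rewrite Rmin_left, Rmax_right in Hx by lra.
apply (continuous_mult (fun x => p x * q x) (w a)); [|apply w_continuous; exact Hx].
apply continuity_pt_filterlim, (continuity_pt_mult p q); [apply Hp|apply Hq].
Qed.

Lemma ip_ext p q r : (forall x, p x = q x) -> ip p r = ip q r.
Proof. intros E; apply RInt_ext; intros; rewrite E; reflexivity. Qed.

Lemma ip_comm p q : ip p q = ip q p.
Proof. apply RInt_ext; intros; change (p x * q x * w a x = q x * p x * w a x); ring. Qed.

Lemma ip_plusl p q r : continuity p -> continuity q -> continuity r ->
  ip (fun x => p x + q x) r = ip p r + ip q r.
Proof.
intros Hp Hq Hr; unfold ip.
rewrite <- (RInt_plus (V := R_CompleteNormedModule)) by (apply ex_RInt_ip; assumption).
apply RInt_ext; intros; change ((p x + q x) * r x * w a x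
  = p x * r x * w a x + q x * r x * w a x); ring.
Qed.

Lemma ip_scall k p r : continuity p -> continuity r ->
  ip (fun x => k * p x) r = k * ip p r.
Proof.
intros Hp Hr; unfold ip.
rewrite <- (RInt_scal (V := R_CompleteNormedModule)) by (apply ex_RInt_ip; assumption).
apply RInt_ext; intros; change (k * p x * r x * w a x = k * (p x * r x * w a x)); ring.
Qed.

Lemma ip_zerol r : ip (fun _ => 0) r = 0.
Proof.
unfold ip; rewrite (RInt_ext _ (fun _ => 0)), (RInt_const (V := R_CompleteNormedModule)).
- change ((1 - -1) * 0 = 0); ring.
- intros; change (0 * r x * w a x = 0); ring.
Qed.

Lemma ip_pow_mpoly k j : (j < k)%nat -> ip (fun x => x ^ j) (mpoly c k a) = 0.
Proof.
intros Hj; unfold ip; rewrite <- (c_MOP a a_range k j Hj); symmetry.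
apply Rint_eq_RInt; [|reflexivity].
apply ex_RInt_ip; [apply continuity_pow|apply continuity_mpoly].
Qed.

Lemma ip_deg_lt_mpoly k q : deg_lt k q -> ip q (mpoly c k a) = 0.
Proof.
intros [b Hb]; rewrite (ip_ext _ _ _ Hb).
enough (H : forall m, (m <= k)%nat ->
  ip (fun x => sumR m (fun j => b j * x ^ j)) (mpoly c k a) = 0) by (apply H; lia).
induction m as [|m IH]; intros Hm; cbn [sumR]; [apply ip_zerol|].
rewrite ip_plusl, ip_scall, ip_pow_mpoly, IH by
  (lia || apply continuity_pow || apply continuity_mpoly
   || exact (deg_lt_continuity _ _ (deg_lt_coefs _ _))
   || exact (deg_lt_continuity _ _ (deg_lt_scal _ _ _ (deg_lt_pow _)))).
ring.
Qed.

Lemma ip_mpoly_self_pos k : 0 < ip (mpoly c k a) (mpoly c k a).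
Proof.
destruct (mpoly_nonvanishing c k a) as [x0 [Hx0 Hnz]].
apply (RInt_gt_0_of_pos_at _ _ _ x0); [lra| | |].
- intros x Hx; apply (continuous_mult (fun x => mpoly c k a x * mpoly c k a x) (w a)).
  + apply continuity_pt_filterlim, (continuity_pt_mult (mpoly c k a) (mpoly c k a));
      apply continuity_mpoly.
  + apply w_continuous; exact Hx.
- intros x Hx; apply Rmult_le_pos; [apply Rle_0_sqr|apply Rlt_le, w_pos, Hx].
- apply Rmult_lt_0_compat; [apply Rlt_0_sqr, Hnz|apply w_pos; lra].
Qed.

Lemma mpoly_expansion n s : deg_lt n s -> forall x,
  sumR n (fun i => ip s (mpoly c i a) / ip (mpoly c i a) (mpoly c i a) * mpoly c i a x)
  = s x.
Proof.
revert s; induction n as [|n IH]; intros s [b Hb] x; [symmetry; apply Hb|].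
set (r := fun x => s x - b n * mpoly c n a x).
assert (Hr : deg_lt n r).
{ apply (deg_lt_ext _ (fun x => sumR n (fun j => b j * x ^ j)
                                - b n * (mpoly c n a x - x ^ n))).
  - intros y; unfold r; rewrite Hb; cbn [sumR]; ring.
  - apply deg_lt_minus; [apply deg_lt_coefs|apply deg_lt_scal, deg_lt_mpoly_sub_pow]. }
assert (Hs : forall i, ip s (mpoly c i a)
                = ip r (mpoly c i a) + b n * ip (mpoly c n a) (mpoly c i a)).
{ intros i; rewrite <- ip_scall, <- ip_plusl by
    (apply continuity_mpoly || exact (deg_lt_continuity _ _ Hr)
     || exact (deg_lt_continuity _ _ (deg_lt_scal _ _ _ (deg_lt_mpoly c n a)))).
  apply ip_ext; intros y; unfold r; ring. }
cbn [sumR].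
rewrite (sumR_ext n _ (fun i => ip r (mpoly c i a) / ip (mpoly c i a) (mpoly c i a)
                                 * mpoly c i a x)).
- rewrite IH by exact Hr; rewrite Hs, (ip_deg_lt_mpoly n r Hr).
  pose proof (ip_mpoly_self_pos n); unfold r; field; lra.
- intros i Hi; rewrite Hs, (ip_comm (mpoly c n a)), (ip_deg_lt_mpoly n (mpoly c i a)); [f_equal; f_equal; ring|].
  apply deg_lt_le with (S i); [lia|apply deg_lt_mpoly].
Qed.

End WeightedInnerProduct.

Lemma one_plus_mul_pos a x : -1 < a < 1 -> -1 <= x <= 1 -> 0 < 1 + a * x.
Proof.
intros Ha Hx; destruct (Rle_dec 0 a).
- assert (0 <= a * (x + 1)) by (apply Rmult_le_pos; lra); nra.
- assert (0 <= (- a) * (1 - x)) by (apply Rmult_le_pos; lra); nra.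
Qed.

Lemma omegat_pos a x : -1 < a < 1 -> -1 <= x <= 1 -> 0 < omegat a x.
Proof. intros; apply Rinv_0_lt_compat, pow_lt, one_plus_mul_pos; assumption. Qed.

Lemma omegat_continuous a x : -1 < a < 1 -> -1 <= x <= 1 -> continuous (omegat a) x.
Proof.
intros Ha Hx; apply (ex_derive_continuous (K := R_AbsRing) (V := R_NormedModule)).
pose proof (one_plus_mul_pos a x Ha Hx); unfold omegat; auto_derive.
change ((1 + a * x) ^ 5 <> 0); apply pow_nonzero; lra.
Qed.

Lemma Kt_eq_ip ct a j k : -1 < a < 1 ->
  Kt ct a j k = ip omegat a (fun x => x ^ j) (mpoly ct k a).
Proof.
intros Ha; apply Rint_eq_RInt; [|reflexivity].
apply ex_RInt_ip; [intros; apply omegat_continuous; assumption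
                  |apply continuity_pow|apply continuity_mpoly].
Qed.

Lemma Kt_diag ct a k : -1 < a < 1 -> is_MOP omegat ct ->
  Kt ct a k k = ip omegat a (mpoly ct k a) (mpoly ct k a).
Proof.
intros Ha Hct; rewrite Kt_eq_ip by exact Ha.
assert (Hw : forall x, -1 <= x <= 1 -> continuous (omegat a) x)
  by (intros; apply omegat_continuous; assumption).
rewrite <- (Rplus_0_r (ip _ _ (fun x => x ^ k) _)),
  <- (ip_deg_lt_mpoly omegat ct a Ha Hw Hct k _ (deg_lt_mpoly_sub_pow ct k a)),
  <- ip_plusl by (assumption || apply continuity_pow || apply continuity_mpoly
                  || exact (deg_lt_continuity _ _ (deg_lt_mpoly_sub_pow ct k a))).
apply ip_ext; intros; ring.
Qed.

(* The projection fixes [omegat * s] for [deg s <= N] and kills [Phit_(N+1)]. *)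
Lemma Ptilde_residual ct N a coef s g :
  -1 < a < 1 -> is_MOP omegat ct -> deg_lt (S N) s ->
  (forall mu, -1 <= mu <= 1 -> g mu = omegat a mu * (s mu + coef * mpoly ct (S N) a mu)) ->
  forall mu, -1 <= mu <= 1 -> g mu - Ptilde ct N a g mu = coef * Phit ct a (S N) mu.
Proof.
intros Ha Hct Hs Hg mu Hmu.
assert (Hw : forall x, -1 <= x <= 1 -> continuous (omegat a) x)
  by (intros; apply omegat_continuous; assumption).
assert (Cs : continuity s) by exact (deg_lt_continuity _ _ Hs).
assert (Hcoef : forall i, (i < S N)%nat ->
  Rint (fun nu => g nu * mpoly ct i a nu) (-1) 1 = ip omegat a s (mpoly ct i a)).
{ intros i Hi.
  assert (Hdeg : deg_lt (S N) (mpoly ct i a))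
    by (apply (deg_lt_le (S i)); [lia|apply deg_lt_mpoly]).
  rewrite (Rint_eq_RInt _
    (fun x => (s x + coef * mpoly ct (S N) a x) * mpoly ct i a x * omegat a x)).
  - change (ip omegat a (fun x => s x + coef * mpoly ct (S N) a x) (mpoly ct i a)
            = ip omegat a s (mpoly ct i a)).
    rewrite ip_plusl, ip_scall, (ip_comm _ _ (mpoly ct (S N) a)),
      (ip_deg_lt_mpoly omegat ct a Ha Hw Hct (S N)) by
      (assumption || apply continuity_mpoly
       || exact (deg_lt_continuity _ _ (deg_lt_scal _ _ _ (deg_lt_mpoly ct (S N) a)))
       || exact Hdeg).
    ring.
  - apply ex_RInt_ip; [assumption| |apply continuity_mpoly].
    exact (deg_lt_continuity _ _ (deg_lt_plus _ _ _ (deg_lt_S _ _ Hs)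
             (deg_lt_scal _ _ _ (deg_lt_mpoly ct (S N) a)))).
  - intros x Hx; rewrite Rmin_left, Rmax_right in Hx by lra.
    change (g x * mpoly ct i a x
            = (s x + coef * mpoly ct (S N) a x) * mpoly ct i a x * omegat a x).
    rewrite Hg by lra; ring. }
unfold Ptilde.
rewrite (sumR_ext (S N) _ (fun i => omegat a mu * (ip omegat a s (mpoly ct i a)
    / ip omegat a (mpoly ct i a) (mpoly ct i a) * mpoly ct i a mu))).
- assert (Hpos : forall x, -1 <= x <= 1 -> 0 < omegat a x)
    by (intros; apply omegat_pos; assumption).
  rewrite sumR_scal, (mpoly_expansion omegat ct a Ha Hw Hpos Hct (S N) s Hs).
  rewrite Hg by exact Hmu; unfold Phit; ring.
- intros i Hi; rewrite Hcoef, Kt_diag by assumption; unfold Phit; ring.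
Qed.

Lemma Rint_pow_mul_Phit ct a n coef g j : -1 < a < 1 ->
  (forall mu, -1 <= mu <= 1 -> g mu = coef * Phit ct a n mu) ->
  Rint (fun mu => mu ^ j * g mu) (-1) 1 = coef * Kt ct a j n.
Proof.
intros Ha Hg.
assert (Hw : forall x, -1 <= x <= 1 -> continuous (omegat a) x)
  by (intros; apply omegat_continuous; assumption).
rewrite Kt_eq_ip, <- ip_scall by (assumption || apply continuity_pow || apply continuity_mpoly).
apply Rint_eq_RInt.
- apply ex_RInt_ip; [assumption| |apply continuity_mpoly].
  exact (deg_lt_continuity _ _ (deg_lt_scal _ _ _ (deg_lt_pow j))).
- intros x Hx; rewrite Rmin_left, Rmax_right in Hx by lra.
  change (x ^ j * g x = coef * x ^ j * mpoly ct n a x * omegat a x).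
  rewrite Hg by lra; unfold Phit; ring.
Qed.

Definition dcoef (c : nat -> nat -> R -> R) (k j : nat) (a : R) : R :=
  epsilon (inhabits 0) (fun l => derivable_pt_lim (c k j) a l).

Definition dmpoly (c : nat -> nat -> R -> R) (k : nat) (a da mu : R) : R :=
  sumR k (fun j => dcoef c k j a * da * mu ^ j).

Definition dIhat_term (c : nat -> nat -> R -> R) (k : nat) (fk dfk a da mu : R) : R :=
  dfk * ((1 + a * mu) * mpoly c k a mu)
  + fk * (-4 * da * (mu * mpoly c k a mu) + (1 + a * mu) * dmpoly c k a da mu).

Definition dIhat_poly (c : nat -> nat -> R -> R) (N : nat) (fz dfz : nat -> R)
    (a da mu : R) : R :=
  sumR (S N) (fun k => dIhat_term c k (fz k) (dfz k) a da mu).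

Lemma derivable_pt_lim_sumR n (F : nat -> R -> R) (l : nat -> R) x :
  (forall i, (i < n)%nat -> derivable_pt_lim (F i) x (l i)) ->
  derivable_pt_lim (fun y => sumR n (fun i => F i y)) x (sumR n l).
Proof.
induction n as [|n IH]; intros H; cbn [sumR]; [apply derivable_pt_lim_const|].
apply (derivable_pt_lim_plus _ (F n)); [apply IH; intros; apply H; lia|apply H; lia].
Qed.

Section DerivativeInZ.

Variables (c : nat -> nat -> R -> R) (alpha dalpha : R -> R) (z mu : R).
Hypothesis c_derivable : forall k j a, -1 < a < 1 -> exists l, derivable_pt_lim (c k j) a l.
Hypothesis alpha_range : -1 < alpha z < 1.
Hypothesis alpha_derivable : derivable_pt_lim alpha z (dalpha z).

Lemma derivable_pt_lim_mpoly_alpha k :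
  derivable_pt_lim (fun z' => mpoly c k (alpha z') mu) z
    (dmpoly c k (alpha z) (dalpha z) mu).
Proof.
replace (dmpoly c k (alpha z) (dalpha z) mu) with
  (0 + sumR k (fun j => dcoef c k j (alpha z) * dalpha z * mu ^ j)) by (unfold dmpoly; ring).
apply (derivable_pt_lim_plus (fun _ => mu ^ k)); [apply derivable_pt_lim_const|].
apply (derivable_pt_lim_sumR k (fun j y => c k j (alpha y) * mu ^ j)); intros j Hj.
replace (dcoef c k j (alpha z) * dalpha z * mu ^ j)
  with (dcoef c k j (alpha z) * dalpha z * mu ^ j + c k j (alpha z) * 0) by ring.
apply (derivable_pt_lim_mult (fun y => c k j (alpha y)) (fun _ => mu ^ j));
  [|apply derivable_pt_lim_const].
apply (derivable_pt_lim_comp alpha (c k j)); [exact alpha_derivable|].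
apply (epsilon_spec (inhabits 0) (fun l => derivable_pt_lim (c k j) (alpha z) l)).
apply c_derivable, alpha_range.
Qed.

Lemma derivable_pt_lim_omega_alpha : -1 <= mu <= 1 ->
  derivable_pt_lim (fun z' => omega (alpha z') mu) z
    (-4 * mu * dalpha z * omegat (alpha z) mu).
Proof.
intros Hmu; pose proof (one_plus_mul_pos _ _ alpha_range Hmu).
replace (-4 * mu * dalpha z * omegat (alpha z) mu)
  with ((-4 * mu * omegat (alpha z) mu) * dalpha z) by ring.
apply (derivable_pt_lim_comp alpha (fun t => omega t mu)); [exact alpha_derivable|].
apply is_derive_Reals; unfold omega, omegat; auto_derive.
- change ((1 + alpha z * mu) ^ 4 <> 0); apply pow_nonzero; lra.
- field; lra.
Qed.

End DerivativeInZ.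

Lemma is_dz_Ihat_poly c N f df alpha dalpha :
  (forall k j a, -1 < a < 1 -> exists l, derivable_pt_lim (c k j) a l) ->
  (forall z, -1 < alpha z < 1) ->
  (forall z, derivable_pt_lim alpha z (dalpha z)) ->
  (forall i z, (i <= N)%nat -> derivable_pt_lim (f i) z (df i z)) ->
  is_dz_Ihat c N f alpha (fun z mu => omegat (alpha z) mu
    * dIhat_poly c N (fun k => f k z) (fun k => df k z) (alpha z) (dalpha z) mu).
Proof.
intros Hc Ha Hal Hf z mu Hmu.
pose proof (one_plus_mul_pos _ _ (Ha z) Hmu).
unfold dIhat_poly; rewrite <- sumR_scal.
apply (derivable_pt_lim_sumR (S N) (fun k y => f k y * Phi c (alpha y) k mu)).
intros k Hk.
(* [omega = (1 + a mu) omegat] turns the product rule into [omegat * dIhat_term]. *)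
replace (omegat (alpha z) mu * dIhat_term c k (f k z) (df k z) (alpha z) (dalpha z) mu)
  with (df k z * Phi c (alpha z) k mu + f k z *
        ((-4 * mu * dalpha z * omegat (alpha z) mu) * mpoly c k (alpha z) mu
         + omega (alpha z) mu * dmpoly c k (alpha z) (dalpha z) mu))
  by (unfold dIhat_term, Phi, omega, omegat; field; lra).
apply (derivable_pt_lim_mult (f k) (fun y => Phi c (alpha y) k mu)); [apply Hf; lia|].
apply (derivable_pt_lim_mult (fun y => omega (alpha y) mu) (fun y => mpoly c k (alpha y) mu));
  [apply derivable_pt_lim_omega_alpha|apply derivable_pt_lim_mpoly_alpha]; auto.
Qed.

Lemma deg_lt_dmpoly c k a da : deg_lt k (dmpoly c k a da).
Proof. exact (deg_lt_coefs k (fun j => dcoef c k j a * da)). Qed.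

Lemma deg_lt_dIhat_term c k fk dfk a da : deg_lt (S (S k)) (dIhat_term c k fk dfk a da).
Proof.
apply deg_lt_plus; apply deg_lt_scal.
- apply deg_lt_affine_mul, deg_lt_mpoly.
- apply deg_lt_plus; [apply deg_lt_scal, deg_lt_mulx, deg_lt_mpoly|].
  apply deg_lt_affine_mul, deg_lt_le with k; [lia|apply deg_lt_dmpoly].
Qed.

(* Only [mu * phi_k] and [a mu * phi_k] reach degree [k + 1]. *)
Lemma deg_lt_dIhat_term_top c k fk dfk a da :
  deg_lt (S k) (fun mu => dIhat_term c k fk dfk a da mu - (a * dfk - 4 * fk * da) * mu ^ S k).
Proof.
set (L := fun mu => mpoly c k a mu - mu ^ k).
apply (deg_lt_ext _ (fun mu => dfk * (mu ^ k + (1 + a * mu) * L mu)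
         + fk * (-4 * da * (mu * L mu) + (1 + a * mu) * dmpoly c k a da mu))).
{ intros mu; unfold dIhat_term, L; cbn [pow]; ring. }
assert (HL : deg_lt k L) by apply deg_lt_mpoly_sub_pow.
apply deg_lt_plus; apply deg_lt_scal.
- apply deg_lt_plus; [apply deg_lt_pow|apply deg_lt_affine_mul, HL].
- apply deg_lt_plus; [apply deg_lt_scal, deg_lt_mulx, HL|].
  apply deg_lt_affine_mul, deg_lt_dmpoly.
Qed.

Lemma deg_lt_dIhat_poly c ct N fz dfz a b da :
  deg_lt (S N) (fun mu => dIhat_poly c N fz dfz a da mu
                          - (a * dfz N - 4 * fz N * da) * mpoly ct (S N) b mu).
Proof.
set (coef := a * dfz N - 4 * fz N * da).
apply (deg_lt_ext _ (fun mu => sumR N (fun k => dIhat_term c k (fz k) (dfz k) a da mu)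
  + (dIhat_term c N (fz N) (dfz N) a da mu - coef * mu ^ S N)
  - coef * (mpoly ct (S N) b mu - mu ^ S N))).
{ intros mu; unfold dIhat_poly; cbn [sumR]; ring. }
apply deg_lt_minus; [apply deg_lt_plus|apply deg_lt_scal, deg_lt_mpoly_sub_pow].
- apply deg_lt_sum; intros k Hk.
  apply deg_lt_le with (S (S k)); [lia|apply deg_lt_dIhat_term].
- apply deg_lt_dIhat_term_top.
Qed.

Lemma derivable_pt_lim_zero_fun g x l :
  (forall y, g y = 0) -> derivable_pt_lim g x l -> l = 0.
Proof.
intros Hg Hl; apply (uniqueness_limite g x); [exact Hl|].
apply (derivable_pt_lim_ext (fun _ => 0)); [intros; symmetry; apply Hg|].
apply derivable_pt_lim_const.
Qed.

Theorem mainTheorem8 :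
  forall (N : nat) (c ct : nat -> nat -> R -> R) (f df : nat -> R -> R)
         (alpha dalpha : R -> R),
    (1 <= N)%nat ->
    is_MOP omega c ->
    is_MOP omegat ct ->
    (forall k j a, -1 < a < 1 -> exists l, derivable_pt_lim (c k j) a l) ->
    (forall z, -1 < alpha z < 1) ->
    (forall z, derivable_pt_lim alpha z (dalpha z)) ->
    (forall z, f 1%nat z = 0) ->
    (forall i z, (i <= N)%nat -> derivable_pt_lim (f i) z (df i z)) ->
    (exists dI, is_dz_Ihat c N f alpha dI) /\
    (forall dI, is_dz_Ihat c N f alpha dI ->
      forall z,
      let a := alpha z in
      let coef := a * df N z - 4 * f N z * dalpha z in
      let Res := fun mu => dI z mu - Ptilde ct N a (dI z) mu in
      (forall mu, -1 <= mu <= 1 -> Res mu = coef * Phit ct a (S N) mu) /\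
      (forall k : nat, (k <= N)%nat ->
         Rint (fun mu => mu ^ (S k) * Res mu) (-1) 1 =
         (if Nat.ltb k N then 0 else Kt ct a (S N) (S N) * coef)) /\
      (N = 1%nat ->
         (forall mu, -1 <= mu <= 1 -> Res mu = 0) /\
         (forall k : nat, (k <= N)%nat ->
            Rint (fun mu => mu ^ (S k) * Res mu) (-1) 1 = 0))).
Proof.
intros N c ct f df alpha dalpha _ _ Hct Hc Hal Hdal Hf1 Hdf.
pose proof (is_dz_Ihat_poly c N f df alpha dalpha Hc Hal Hdal Hdf) as HdI0.
split; [eexists; exact HdI0|]; intros dI HdI z a coef Res.
set (B := dIhat_poly c N (fun k => f k z) (fun k => df k z) a (dalpha z)).
assert (HResid : forall mu, -1 <= mu <= 1 -> Res mu = coef * Phit ct a (S N) mu).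
{ apply (Ptilde_residual ct N a coef (fun mu => B mu - coef * mpoly ct (S N) a mu));
    [apply Hal|exact Hct|apply deg_lt_dIhat_poly|].
  intros mu Hmu; rewrite (uniqueness_limite _ z _ _ (HdI z mu Hmu) (HdI0 z mu Hmu)).
  unfold B, a; ring. }
assert (HMoments : forall k, (k <= N)%nat -> Rint (fun mu => mu ^ S k * Res mu) (-1) 1
          = (if Nat.ltb k N then 0 else Kt ct a (S N) (S N) * coef)).
{ intros k Hk; rewrite (Rint_pow_mul_Phit ct a (S N) coef Res (S k) (Hal z) HResid).
  destruct (Nat.ltb_spec k N) as [Hlt|Hge].
  - unfold Kt; rewrite (Hct a (Hal z)) by lia; ring.
  - replace k with N by lia; ring. }
split; [exact HResid|split; [exact HMoments|intros ->]].
assert (Hcoef : coef = 0).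
{ unfold coef; rewrite Hf1, (derivable_pt_lim_zero_fun (f 1%nat) z (df 1%nat z) Hf1);
    [ring|apply Hdf, le_n]. }
split; [intros mu Hmu|intros k Hk]; rewrite ?HResid, ?HMoments, Hcoef by assumption;
  [ring|destruct (Nat.ltb k 1); ring].
Qed.
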